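(* Let $S$ be a virtual flat biquandle, $C_n(S)$ the free abelian group on $n$-tuples of elements of $S$ ($C_0(S)=0$), with boundary $\partial_n$ given by $\partial_n=0$ for $n\le 1$ and for $n\ge2$ $$\partial_n(a_1,\dots,a_n)=\sum_{i=1}^n(-1)^i\big((a_1\ast a_i,\dots,a_{i-1}\ast a_i,a_{i+1},\dots,a_n)-(a_1,\dots,a_{i-1},a_{i+1}\circ a_i,\dots,a_n\circ a_i)\big).$$ Let $C_n'(S)\subset C_n(S)$ be the subgroup generated by the elements $(a_1,\dots,a_i,a_{i+1},\dots,a_n)+(a_1,\dots,a_{i+1}\circ a_i,a_i\ast a_{i+1},\dots,a_n)$ for $n\ge2$ (all $a_j\in S$, $1\le i\le n-1$), and $C_n'(S)=0$ for $n\le1$. Then $\partial_n(C_n'(S))\subset C_{n-1}'(S)$ for all $n$, so $\{C_n'(S),\partial_n\}$ is a sub-complex of $\{C_n(S),\partial_n\}$.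
   Context: A virtual flat biquandle is a set $S$ with two binary operations $a\ast b$, $a\circ b$; writing $S_b(a)=a\ast b$, $T_b(a)=a\circ b$, for all $a,b\in S$: (1) $S_aS_b=S_bS_a$, $T_aT_b=T_bT_a$, $S_aT_b=T_bS_a$; (2) $S_a=S_{T_b(a)}=S_{S_b(a)}$, $T_a=T_{S_b(a)}=T_{T_b(a)}$; (3) $T_aS_a=S_aT_a=\mathrm{id}$. The maps $\partial_n$ satisfy $\partial_{n-1}\partial_n=0$. *)

From HB Require Import structures.
From mathcomp Require Import all_boot all_order all_algebra.
From mathcomp Require Export freeg.
Set Implicit Arguments. Unset Strict Implicit. Unset Printing Implicit Defensive.
Import Order.TTheory GRing.Theory Num.Theory.
Local Open Scope ring_scope.

(* A virtual flat biquandle: ast a b = a * b = S_b(a), circ a b = a o b = T_b(a). *)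
Definition virtual_flat_biquandle (S : Type) (ast circ : S -> S -> S) : Prop :=
  ((forall a b x, ast (ast x b) a = ast (ast x a) b)
      /\ (forall a b x, circ (circ x b) a = circ (circ x a) b)
      /\ (forall a b x, ast (circ x b) a = circ (ast x a) b))
  /\ ((forall a b x, ast x a = ast x (circ a b) /\ ast x a = ast x (ast a b))
      /\ (forall a b x, circ x a = circ x (ast a b) /\ circ x a = circ x (circ a b)))
  /\
      (forall a x, circ (ast x a) a = x /\ ast (circ x a) a = x).

(* Chains: the free abelian group on finite sequences of elements of S;
   C_n(S) is the subgroup supported on sequences of length n. *)
Notation chain S := {freeg (seq S) / int}.

Section Complex.
Variables (S : choiceType) (ast circ : S -> S -> S).

(* for a = (a_1,...,a_n) and 0-based index i (i.e. the paper's i+1):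
   (a_1 * a_{i+1}, ..., a_i * a_{i+1}, a_{i+2}, ..., a_n) *)
Definition face_ast (s : seq S) (i : nat) (x : S) : seq S :=
  map (fun a => ast a x) (take i s) ++ drop i.+1 s.
Definition face_circ (s : seq S) (i : nat) (x : S) : seq S :=
  take i s ++ map (fun a => circ a x) (drop i.+1 s).

Definition bd_basis (s : seq S) : chain S :=
  match s with
  | [::] | [:: _] => 0
  | a :: _ =>
    \sum_(i < size s)
       (-1) ^+ i.+1 *: (<< face_ast s i (nth a s i) >> - << face_circ s i (nth a s i) >>)
  end.

Definition bd (c : chain S) : chain S := fglift bd_basis c.

(* generator of C'_n : for 0-based i with i+1 < n,
   (a_1,...,a_n) + (a_1,...,a_{i+2} o a_{i+1}, a_{i+1} * a_{i+2}, ..., a_n) *)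
Definition swap_at (s : seq S) (i : nat) (x y : S) : seq S :=
  take i s ++ [:: circ y x; ast x y] ++ drop i.+2 s.

Definition degen_gen (s : seq S) (i : nat) (x y : S) : chain S :=
  << s >> + << swap_at s i x y >>.

(* c lies in C'_n(S): c is a Z-linear combination of generators
   (s, i) with size s = n and 1 <= i+1 <= n-1 (which forces n >= 2). *)
Definition in_Cprime (n : nat) (c : chain S) : Prop :=
  exists l : seq (int * (seq S * nat)),
    all (fun g => (size g.2.1 == n) && (g.2.2.+1 < n)%N) l /\
    c = \sum_(g <- l)
          g.1 *: (let s := g.2.1 in let i := g.2.2 in
                  match s with
                  | [::] => 0
                  | a :: _ => degen_gen s i (nth a s i) (nth a s i.+1)
                  end).

End Complex.

From HB Require Import structures.
From mathcomp Require Import all_boot all_order all_algebra freeg zify.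
Set Implicit Arguments. Unset Strict Implicit. Unset Printing Implicit Defensive.
Import GRing.Theory Num.Theory.
Local Open Scope ring_scope.

(* Swapping the adjacent entries a_k, a_(k+1) of a tuple s (into a_(k+1) o a_k,
   a_k * a_(k+1)) permutes the faces of s: the k-th and (k+1)-th faces are
   exchanged, and every other face of the swapped tuple is the corresponding
   face of s with an adjacent swap performed on it.  As the
   exchanged faces carry opposite signs, the boundary of a generator of C'_n
   telescopes to a signed sum of generators of C'_(n-1). *)

Ltac decide_ifs := repeat match goal with
  | |- context [if ?c then _ else _] =>
    first [ have -> : c = true by lia | have -> : c = false by lia ] end.

HB.instance Definition _ (S : choiceType) (ast circ : S -> S -> S) :=
  GRing.isZmodMorphism.Build (chain S) (chain S) (bd ast circ) (lift_is_additive _).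

Section Biquandle.
Variables (S : Type) (ast circ : S -> S -> S).
Hypothesis vfb : virtual_flat_biquandle ast circ.

Lemma astC a b x : ast (ast x b) a = ast (ast x a) b.
Proof. by case: vfb => -[]. Qed.

Lemma circC a b x : circ (circ x b) a = circ (circ x a) b.
Proof. by case: vfb => -[_ []]. Qed.

Lemma ast_circC a b x : ast (circ x b) a = circ (ast x a) b.
Proof. by case: vfb => -[_ []]. Qed.

Lemma ast_circr a b x : ast x (circ a b) = ast x a.
Proof. by case: vfb => _ [[/(_ a b x) []]]. Qed.

Lemma ast_astr a b x : ast x (ast a b) = ast x a.
Proof. by case: vfb => _ [[/(_ a b x) []]]. Qed.

Lemma circ_astr a b x : circ x (ast a b) = circ x a.
Proof. by case: vfb => _ [[_ /(_ a b x) []]]. Qed.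

Lemma circ_circr a b x : circ x (circ a b) = circ x a.
Proof. by case: vfb => _ [[_ /(_ a b x) []]]. Qed.

Lemma astK a x : circ (ast x a) a = x.
Proof. by case: vfb => _ [_ /(_ a x) []]. Qed.

Lemma circK a x : ast (circ x a) a = x.
Proof. by case: vfb => _ [_ /(_ a x) []]. Qed.

End Biquandle.

Section Faces.
Variables (S : choiceType) (ast circ : S -> S -> S) (d : S).
Implicit Types (s : seq S) (x y : S).

Lemma size_face_ast s j x :
  (j < size s)%N -> size (face_ast ast s j x) = (size s).-1.
Proof. by move=> lt_j; rewrite size_cat size_map size_take lt_j size_drop; lia. Qed.

Lemma size_face_circ s j x :
  (j < size s)%N -> size (face_circ circ s j x) = (size s).-1.
Proof. by move=> lt_j; rewrite size_cat size_map size_take lt_j size_drop; lia. Qed.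

Lemma size_swap_at s k x y :
  (k.+1 < size s)%N -> size (swap_at ast circ s k x y) = size s.
Proof.
by move=> lt_kS; rewrite !size_cat size_take size_drop /=; decide_ifs; lia.
Qed.

Lemma nth_face_ast s j x i :
  (j < size s)%N ->
  nth d (face_ast ast s j x) i = if (i < j)%N then ast (nth d s i) x else nth d s i.+1.
Proof.
move=> lt_j; rewrite nth_cat size_map size_take lt_j.
case: ifP => lt_ij; first by rewrite (nth_map d) ?size_take ?lt_j // nth_take.
by rewrite nth_drop; congr nth; lia.
Qed.

Lemma nth_face_circ s j x i :
  (j < size s)%N -> (i < (size s).-1)%N ->
  nth d (face_circ circ s j x) i = if (i < j)%N then nth d s i else circ (nth d s i.+1) x.
Proof.
move=> lt_j lt_i; rewrite nth_cat size_take lt_j.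
case: ifP => lt_ij; first by rewrite nth_take.
rewrite (nth_map d) ?nth_drop; last by rewrite size_drop; lia.
by congr (circ (nth _ _ _) _); lia.
Qed.

Lemma nth_swap_at s k x y i :
  (k.+1 < size s)%N ->
  nth d (swap_at ast circ s k x y) i =
    if (i < k)%N then nth d s i else if i == k then circ y x
    else if i == k.+1 then ast x y else nth d s i.
Proof.
move=> lt_kS; rewrite nth_cat size_take; decide_ifs.
case: ifP => lt_ik; first by rewrite nth_take.
rewrite nth_cat /=; case def_m: (i - k)%N => [|[|m]] /=; decide_ifs => //.
by rewrite nth_drop; congr nth; lia.
Qed.

Lemma bd_basisE s : (1 < size s)%N ->
  bd_basis ast circ s = \sum_(i < size s) (-1) ^+ i.+1 *:
     (<< face_ast ast s i (nth d s i) >> - << face_circ circ s i (nth d s i) >>).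
Proof.
case: s => [|a [|b t]] // _.
by apply: eq_bigr => i _; rewrite (set_nth_default d a).
Qed.

End Faces.

Section DegenerateChains.
Variables (S : choiceType) (ast circ : S -> S -> S) (n : nat).
Local Notation in_Cprime := (in_Cprime ast circ n).

Lemma in_Cprime0 : in_Cprime 0.
Proof. by exists [::]; rewrite big_nil. Qed.

Lemma in_CprimeD c1 c2 : in_Cprime c1 -> in_Cprime c2 -> in_Cprime (c1 + c2).
Proof.
by move=> [l1 [gen1 ->]] [l2 [gen2 ->]]; exists (l1 ++ l2); rewrite all_cat gen1 gen2 big_cat.
Qed.

Lemma in_CprimeZ (z : int) c : in_Cprime c -> in_Cprime (z *: c).
Proof.
move=> [l [gen ->]]; exists [seq (z * g.1, g.2) | g <- l]; rewrite all_map.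
by split=> //; rewrite big_map scaler_sumr; apply: eq_bigr => g _; rewrite scalerA.
Qed.

Lemma in_CprimeB c1 c2 : in_Cprime c1 -> in_Cprime c2 -> in_Cprime (c1 - c2).
Proof. by move=> in1 in2; rewrite -scaleN1r; apply/in_CprimeD/in_CprimeZ. Qed.

Lemma in_Cprime_sum (I : eqType) (r : seq I) (F : I -> chain S) :
  (forall i, i \in r -> in_Cprime (F i)) -> in_Cprime (\sum_(i <- r) F i).
Proof.
by move=> inF; rewrite big_seq; apply: big_ind => //; [apply: in_Cprime0 | apply: in_CprimeD].
Qed.

Lemma in_Cprime_degen d s k : size s = n -> (k.+1 < n)%N ->
  in_Cprime (<< s >> + << swap_at ast circ s k (nth d s k) (nth d s k.+1) >>).
Proof.
move=> size_s lt_kS; exists [:: (1, (s, k))]; rewrite /= size_s eqxx lt_kS.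
split=> //; rewrite big_seq1 scale1r.
case: s size_s => [|a t] size_s; first by rewrite -size_s in lt_kS.
by rewrite /degen_gen !(set_nth_default a d) // size_s; lia.
Qed.

End DegenerateChains.

Section AdjacentSwap.
Variables (S : choiceType) (ast circ : S -> S -> S) (d : S).
Hypothesis vfb : virtual_flat_biquandle ast circ.

Local Notation ast_face t j := (face_ast ast t j (nth d t j)).
Local Notation circ_face t j := (face_circ circ t j (nth d t j)).
Local Notation swap_adj t m := (swap_at ast circ t m (nth d t m) (nth d t m.+1)).

(* s' is swap_adj s k, known only through its entries, so that rewriting
   with nth_s' leaves the entries of s alone. *)
Variables (s s' : seq S) (k : nat).
Hypotheses (lt_kS : (k.+1 < size s)%N) (size_s' : size s' = size s).
Hypothesis nth_s' : forall i, nth d s' i =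
  if (i < k)%N then nth d s i else if i == k then circ (nth d s k.+1) (nth d s k)
  else if i == k.+1 then ast (nth d s k) (nth d s k.+1) else nth d s i.

Local Ltac expand_swap_face size_face nth_face :=
  apply: (eq_from_nth (x0 := d)); [by rewrite size_swap_at ?size_face ?size_s' //; lia|];
  move=> i; rewrite size_face ?size_s' => [lt_i|]; last lia;
  rewrite nth_swap_at ?size_face; try lia;
  rewrite !nth_face ?size_s' //; try lia;
  rewrite !nth_s'.

Lemma ast_face_swap_lt j : (j < k)%N -> ast_face s' j = swap_adj (ast_face s j) k.-1.
Proof.
move=> lt_jk; expand_swap_face size_face_ast nth_face_ast; rewrite (ltn_predK lt_jk).
have: (i < j \/ j <= i < k.-1 \/ i = k.-1 \/ i = k \/ k < i)%N by lia.
by case=> [?|[?|[->|[->|?]]]]; decide_ifs.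
Qed.

Lemma ast_face_swap_gt j : (k.+1 < j < size s)%N -> ast_face s' j = swap_adj (ast_face s j) k.
Proof.
case/andP=> lt_kSj lt_j; expand_swap_face size_face_ast nth_face_ast.
have: (i < k \/ i = k \/ i = k.+1 \/ k.+1 < i < j \/ j <= i)%N by lia.
case=> [?|[->|[->|[?|?]]]]; decide_ifs => //.
- by rewrite (ast_circC vfb) (circ_astr vfb).
- by rewrite (ast_astr vfb) (astC vfb).
Qed.

Lemma circ_face_swap_lt j : (j < k)%N -> circ_face s' j = swap_adj (circ_face s j) k.-1.
Proof.
move=> lt_jk; expand_swap_face size_face_circ nth_face_circ; rewrite (ltn_predK lt_jk).
have: (i < j \/ j <= i < k.-1 \/ i = k.-1 \/ i = k \/ k < i)%N by lia.
case=> [?|[?|[->|[->|?]]]]; decide_ifs => //.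
- by rewrite (circ_circr vfb) (circC vfb).
- by rewrite (ast_circr vfb) (ast_circC vfb).
Qed.

Lemma circ_face_swap_gt j : (k.+1 < j < size s)%N -> circ_face s' j = swap_adj (circ_face s j) k.
Proof.
case/andP=> lt_kSj lt_j; expand_swap_face size_face_circ nth_face_circ.
have: (i < k \/ i = k \/ i = k.+1 \/ k.+1 < i < j \/ j <= i)%N by lia.
by case=> [?|[->|[->|[?|?]]]]; decide_ifs.
Qed.

Local Ltac expand_face size_face nth_face :=
  apply: (eq_from_nth (x0 := d)); [by rewrite !size_face ?size_s' //; lia|];
  move=> i; rewrite size_face ?size_s' => [lt_i|]; last lia;
  rewrite !nth_face ?size_s' //; try lia;
  rewrite !nth_s'.

Lemma ast_face_swap_k : ast_face s' k = ast_face s k.+1.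
Proof.
expand_face size_face_ast nth_face_ast.
have: (i < k \/ i = k \/ k < i)%N by lia.
by case=> [?|[->|?]]; decide_ifs; rewrite ?(ast_circr vfb).
Qed.

Lemma ast_face_swap_kS : ast_face s' k.+1 = ast_face s k.
Proof.
expand_face size_face_ast nth_face_ast.
have: (i < k \/ i = k \/ k < i)%N by lia.
by case=> [?|[->|?]]; decide_ifs; rewrite ?(ast_astr vfb) ?(circK vfb).
Qed.

Lemma circ_face_swap_k : circ_face s' k = circ_face s k.+1.
Proof.
expand_face size_face_circ nth_face_circ.
have: (i < k \/ i = k \/ k < i)%N by lia.
by case=> [?|[->|?]]; decide_ifs; rewrite ?(circ_circr vfb) ?(astK vfb).
Qed.

Lemma circ_face_swap_kS : circ_face s' k.+1 = circ_face s k.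
Proof.
expand_face size_face_circ nth_face_circ.
have: (i < k \/ i = k \/ k < i)%N by lia.
by case=> [?|[->|?]]; decide_ifs; rewrite ?(circ_astr vfb).
Qed.

Local Notation bd_term t i :=
  ((-1) ^+ i.+1 *: (<< ast_face t i >> - << circ_face t i >>)).

Lemma bd_term_swap_in_Cprime i : (i < size s)%N -> i != k -> i != k.+1 ->
  in_Cprime ast circ (size s).-1 (bd_term s i + bd_term s' i).
Proof.
move=> lt_i ne_ik ne_ikS; rewrite -scalerDr addrACA -opprD.
apply: in_CprimeZ.
case: (ltngtP i k) => [lt_ik | lt_ki | eq_ik]; last by rewrite eq_ik eqxx in ne_ik.
- rewrite ast_face_swap_lt // circ_face_swap_lt //.
  by apply: in_CprimeB; apply: in_Cprime_degen; rewrite ?size_face_ast ?size_face_circ //; lia.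
- have lt_kSi : (k.+1 < i < size s)%N by lia.
  rewrite ast_face_swap_gt // circ_face_swap_gt //.
  by apply: in_CprimeB; apply: in_Cprime_degen; rewrite ?size_face_ast ?size_face_circ //; lia.
Qed.

Lemma bd_basis_swap_in_Cprime :
  in_Cprime ast circ (size s).-1 (bd_basis ast circ s + bd_basis ast circ s').
Proof.
have [lt_k lt_1] : (k < size s)%N /\ (1 < size s)%N by lia.
rewrite (bd_basisE _ _ d) // (@bd_basisE _ _ _ d s') size_s' // -big_split /=.
rewrite (bigD1 (Ordinal lt_k)) // (bigD1 (Ordinal lt_kS)) /=; last by rewrite -val_eqE /=; lia.
rewrite addrA.
have -> : bd_term s k + bd_term s' k + (bd_term s k.+1 + bd_term s' k.+1) = 0 :> chain S.
  rewrite ast_face_swap_k circ_face_swap_k ast_face_swap_kS circ_face_swap_kS.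
  by rewrite [_ ^+ k.+2]exprS mulN1r !scaleNr -opprD (addrC (_ *: _)) subrr.
rewrite add0r.
apply: big_ind => [|c1 c2|i /andP[ne_ik ne_ikS]]; [exact: in_Cprime0 | exact: in_CprimeD |].
exact: bd_term_swap_in_Cprime.
Qed.

End AdjacentSwap.

Lemma bd_degen_gen_in_Cprime (S : choiceType) (ast circ : S -> S -> S) d s k :
  virtual_flat_biquandle ast circ -> (k.+1 < size s)%N ->
  in_Cprime ast circ (size s).-1 (bd ast circ (degen_gen ast circ s k (nth d s k) (nth d s k.+1))).
Proof.
move=> vfb lt_kS; rewrite raddfD /= /bd !liftU !scale1r.
apply: (bd_basis_swap_in_Cprime (d := d) vfb lt_kS); first exact: size_swap_at.
by move=> i; rewrite nth_swap_at.
Qed.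

Theorem lemma5p2 (S : choiceType) (ast circ : S -> S -> S) :
  virtual_flat_biquandle ast circ ->
  forall (n : nat) (c : {freeg (seq S) / int}),
    in_Cprime ast circ n c -> in_Cprime ast circ n.-1 (bd ast circ c).
Proof.
move=> vfb n c [gens [/allP gens_ok ->]].
rewrite raddf_sum; apply: in_Cprime_sum => -[z [s k]] /gens_ok /= /andP[/eqP size_s lt_kS].
rewrite raddfZ_int ?intr_int //; apply: in_CprimeZ.
case: s size_s lt_kS => [<- //|a t] size_s lt_kS.
by rewrite -size_s in lt_kS *; apply: bd_degen_gen_in_Cprime.
Qed.
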